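(* Let $R$ be a ring, let $\{A_i\mid i\in I\}$ be a family of slender right $R$-modules with local endomorphism rings, and let $\{B_j\mid j\in J\}$ be a family of indecomposable slender right $R$-modules. Assume: (a) $|I|$ and $|J|$ are non-measurable cardinals; (b) in each of the two families, each isomorphism class contains at most countably many members; (c) $\prod_{i\in I}A_i\cong\prod_{j\in J}B_j$. Then there exists a bijection $\sigma\colon I\to J$ with $A_i\cong B_{\sigma(i)}$ for every $i\in I$.
   Context: A right $R$-module $M$ is slender if for every homomorphism $f\colon R^\omega=\prod_{n<\omega}e_nR\to M$ (with $e_n$ the element having $1$ in position $n$ and $0$ elsewhere) there is $n_0$ with $f(e_n)=0$ for all $n\ge n_0$. *)

(* Right R-modules are modelled as left modules over the
   converse ring R^c: for M : lmodType R^c, the right action m.r is r *: m. *)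
From HB Require Import structures.
From mathcomp Require Import all_boot all_order all_algebra.
Set Implicit Arguments. Unset Strict Implicit. Unset Printing Implicit Defensive.
Import GRing.Theory.
Local Open Scope ring_scope.

Definition mod_iso (R : pzRingType) (M N : lmodType R) : Prop :=
  exists f : {linear M -> N}, bijective f.

Definition unit_vec (R : pzRingType) (n : nat) : nat -> R :=
  fun k => if k == n then 1 else 0.

(* M (a right R-module) is slender: every right R-module homomorphism
   f : R^omega -> M kills almost all e_n.  R^omega is nat -> R with pointwise
   addition and right action (x.r)_n = x_n * r. *)
Definition slender (R : pzRingType) (M : lmodType R^c) : Prop :=
  forall f : (nat -> R) -> M,
    (forall x y, f (fun n => x n + y n) = f x + f y) ->
    (forall (x : nat -> R) (r : R), f (fun n => x n * r) = (r : R^c) *: f x) ->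
    exists n0 : nat, forall n, (n0 <= n)%N -> f (unit_vec R n) = 0.

Definition End_unit (R : pzRingType) (M : lmodType R) (f : {linear M -> M}) : Prop :=
  bijective f.

(* End(M) is a local ring: 1 <> 0 in End(M) (i.e. M <> 0) and the non-units
   of End(M) are closed under addition (hence form an ideal). *)
Definition local_End (R : pzRingType) (M : lmodType R) : Prop :=
  (exists m : M, m != 0) /\
  forall f g : {linear M -> M},
    ~ End_unit f -> ~ End_unit g ->
    ~ (exists h : {linear M -> M}, (forall m, h m = f m + g m) /\ End_unit h).

Definition submodule (R : pzRingType) (M : lmodType R) (N : M -> Prop) : Prop :=
  N 0 /\ (forall x y, N x -> N y -> N (x + y)) /\ (forall (r : R) x, N x -> N (r *: x)).

Definition indecomposable (R : pzRingType) (M : lmodType R) : Prop :=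
  (exists m : M, m != 0) /\
  forall N P : M -> Prop, submodule N -> submodule P ->
    (forall m, N m -> P m -> m = 0) ->
    (forall m, exists n p, N n /\ P p /\ m = n + p) ->
    (forall m, N m -> m = 0) \/ (forall m, P m -> m = 0).

Definition ultrafilter (I : Type) (U : (I -> Prop) -> Prop) : Prop :=
  ~ U (fun _ => False) /\
  (forall X Y : I -> Prop, U X -> (forall i, X i -> Y i) -> U Y) /\
  (forall X Y : I -> Prop, U X -> U Y -> U (fun i => X i /\ Y i)) /\
  (forall X : I -> Prop, U X \/ U (fun i => ~ X i)).

Definition countably_complete (I : Type) (U : (I -> Prop) -> Prop) : Prop :=
  forall X : nat -> I -> Prop, (forall n, U (X n)) -> U (fun i => forall n, X n i).

Definition principal (I : Type) (U : (I -> Prop) -> Prop) : Prop :=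
  exists i0 : I, forall X : I -> Prop, U X <-> X i0.

Definition nonmeasurable (I : Type) : Prop :=
  forall U : (I -> Prop) -> Prop, ultrafilter U -> countably_complete U -> principal U.

Definition iso_classes_countable (R : pzRingType) (I : Type) (A : I -> lmodType R) : Prop :=
  forall i : I, exists g : I -> nat, forall i1 i2 : I,
    mod_iso (A i) (A i1) -> mod_iso (A i) (A i2) -> g i1 = g i2 -> i1 = i2.

Definition prod_iso (R : pzRingType) (I J : Type)
    (A : I -> lmodType R) (B : J -> lmodType R) : Prop :=
  exists f : (forall i, A i) -> (forall j, B j),
    bijective f /\
    (forall x y, f (fun i => x i + y i) = (fun j => f x j + f y j)) /\
    (forall (r : R) x, f (fun i => r *: x i) = (fun j => r *: f x j)).

(* Since I and J are non-measurable, Łoś's theorem for slender modules says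
   that every homomorphism from prod_i A_i (or prod_j B_j) into a slender
   module depends on finitely many coordinates.  Hence the identity of B_j is a
   finite sum of maps factoring through some A_i, and the local endomorphism
   rings force B_j ~ A_i for one of them.  Fix a class C of the A_i: mapping
   n distinct copies of C among the A_i into the B_j and back gives the
   identity n x n matrix over End(C) as a product of an n x m and an m x n
   matrix modulo the maximal ideal, where m counts the B_j ~ C (the other B_j
   only contribute nonunits, being indecomposable and not ~ C).  So the class
   has at least as many members in J as in I, and symmetrically; as classes are
   countable, this yields a bijection on each class, and these glue to sigma. *)

From HB Require Import structures.
From mathcomp Require Import all_boot all_order all_algebra.
From mathcomp Require Import boolp.
From Stdlib Require List.
Set Implicit Arguments. Unset Strict Implicit. Unset Printing Implicit Defensive.
Import GRing.Theory.
Local Open Scope ring_scope.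

Section LinearMaps.
Variable S : pzRingType.

(* Linearity as a predicate: the maps we need, e.g. coordinates of maps between
   products, are not bundled. *)
Definition lin (M N : lmodType S) (f : M -> N) :=
  (forall x y, f (x + y) = f x + f y) /\ (forall (r : S) x, f (r *: x) = r *: f x).

Definition linear_of (M N : lmodType S) (f : M -> N) (h : lin f) : {linear M -> N} :=
  HB.pack f (GRing.isSemilinear.Build _ _ _ _ f (proj2 h, proj1 h)).

Variables M N K : lmodType S.

Lemma lin0 (f : M -> N) : lin f -> f 0 = 0.
Proof.
by move=> [fD _]; apply: (addrI (f 0)); rewrite -fD !addr0.
Qed.

Lemma linN (f : M -> N) : lin f -> forall x, f (- x) = - f x.
Proof. by move=> h x; apply/eqP; rewrite -subr_eq0 opprK -(proj1 h) addNr lin0. Qed.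

Lemma linB (f : M -> N) : lin f -> forall x y, f (x - y) = f x - f y.
Proof. by move=> h x y; rewrite (proj1 h) linN. Qed.

Lemma lin_id : lin (fun x : M => x). Proof. by []. Qed.

Lemma lin_zero : lin (fun _ : M => (0 : N)).
Proof. by split=> *; rewrite ?addr0 ?scaler0. Qed.

Lemma lin_comp (f : M -> N) (g : N -> K) : lin f -> lin g -> lin (fun x => g (f x)).
Proof. by move=> [fD fZ] [gD gZ]; split=> *; rewrite ?fD ?gD ?fZ ?gZ. Qed.

Lemma lin_add (f g : M -> N) : lin f -> lin g -> lin (fun x => f x + g x).
Proof.
by move=> [fD fZ] [gD gZ]; split=> *; rewrite ?fD ?gD ?fZ ?gZ ?scalerDr // addrACA.
Qed.

Lemma lin_opp (f : M -> N) : lin f -> lin (fun x => - f x).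
Proof. by move=> [fD fZ]; split=> *; rewrite ?fD ?fZ ?opprD ?scalerN. Qed.

Lemma lin_sub (f g : M -> N) : lin f -> lin g -> lin (fun x => f x - g x).
Proof. by move=> hf hg; apply: lin_add => //; apply: lin_opp. Qed.

Lemma lin_ext (f g : M -> N) : lin f -> f =1 g -> lin g.
Proof. by move=> [fD fZ] e; split=> *; rewrite -!e ?fD ?fZ. Qed.

Lemma lin_sum (f : M -> N) (T : Type) (s : seq T) (P : pred T) (G : T -> M) : lin f ->
  f (\sum_(t <- s | P t) G t) = \sum_(t <- s | P t) f (G t).
Proof.
move=> hf; elim: s => [|t s IH]; first by rewrite !big_nil (lin0 hf).
by rewrite !big_cons; case: (P t); rewrite ?(proj1 hf) IH.
Qed.

Lemma lin_inv (f : M -> N) g : lin f -> cancel f g -> cancel g f -> lin g.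
Proof.
move=> [fD fZ] fK gK; split=> [x y|r x].
  by rewrite -{1}[x]gK -{1}[y]gK -fD fK.
by rewrite -{1}[x]gK -fZ fK.
Qed.

End LinearMaps.

Section LocalEndomorphisms.
Variables (S : pzRingType) (C : lmodType S).

Definition nonunit (f : C -> C) := lin f /\ ~ bijective f.

Lemma nonunit_ext f g : nonunit f -> f =1 g -> nonunit g.
Proof.
move=> [fl fb] e; split; first exact: lin_ext fl e.
by move=> [h gK hK]; apply: fb; exists h => x; rewrite ?e ?gK ?hK.
Qed.

Lemma not_bij0 (f : C -> C) : (exists m : C, m != 0) -> f =1 (fun=> 0) -> ~ bijective f.
Proof.
move=> [m m0] f0 [h fK _]; move: m0.
by rewrite -(fK m) -(fK 0) f0 (f0 0) eqxx.
Qed.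

Lemma nonunit_idF : ~ nonunit id.
Proof. by move=> [_ []]; exists id. Qed.

Lemma bij_of_not_nonunit f : lin f -> ~ nonunit f -> bijective f.
Proof. by move=> fl fJ; apply: contrapT => fb; apply: fJ. Qed.

Hypothesis C_local : local_End C.

Lemma nonunit0 : nonunit (fun _ => 0).
Proof. by split; [exact: lin_zero | exact: not_bij0 (proj1 C_local) _]. Qed.

Lemma nonunit_add f g : nonunit f -> nonunit g -> nonunit (fun x => f x + g x).
Proof.
move=> [fl fb] [gl gb]; split; first exact: lin_add.
move=> fgb; apply: (proj2 C_local (linear_of fl) (linear_of gl) fb gb).
by exists (linear_of (lin_add fl gl)).
Qed.

Lemma idempotent_id_or_0 (e : C -> C) : lin e -> (forall x, e (e x) = e x) ->
  e =1 id \/ e =1 (fun=> 0).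
Proof.
move=> el ee.
have l1 : lin (fun x => x - e x) by apply: lin_sub => //; exact: lin_id.
have [[h eK hK]|eb] := pselect (bijective e).
  by left => x; rewrite -{2}[x]hK -{1}[x]hK ee.
have [[h eK _]|e'b] := pselect (bijective (fun x => x - e x)).
  right => x; have := eK (e x); rewrite /= ee subrr => <-.
  by have := eK 0; rewrite /= (lin0 el) subrr.
exfalso; apply: nonunit_idF.
apply: nonunit_ext (nonunit_add (conj el eb) (conj l1 e'b)) _ => x.
by rewrite addrC subrK.
Qed.

(* If b \o a were invertible with inverse h, then a \o h \o b would be an
   idempotent, hence 0 or 1; both contradict a being a nonunit. *)
Lemma nonunit_compr a b : nonunit a -> lin b -> nonunit (fun x => b (a x)).
Proof.
move=> [al ab] bl; split; first exact: lin_comp.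
move=> [h hK1 hK2].
have el : lin (fun x => a (h (b x))).
  by apply: lin_comp => //; apply: lin_comp => //; exact: lin_inv (lin_comp al bl) hK1 hK2.
have [e1|e0] := idempotent_id_or_0 el (fun x => congr1 a (hK1 _)).
  by apply: ab; exists (fun x => h (b x)).
apply: (@not_bij0 (fun x => b (a x)) (proj1 C_local)); last by exists h.
by move=> x; rewrite -{1}[x]hK1 e0 (lin0 bl).
Qed.

Lemma nonunit_compl a b : nonunit a -> lin b -> nonunit (fun x => a (b x)).
Proof.
move=> [al ab] bl; split; first exact: lin_comp.
move=> [h hK1 hK2].
have hl : lin h by exact: lin_inv (lin_comp bl al) hK1 hK2.
have el : lin (fun x => b (h (a x))) by apply: lin_comp => //; apply: lin_comp.
have [e1|e0] := idempotent_id_or_0 el (fun x => congr1 (b \o h) (hK2 _)).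
  by apply: ab; exists (fun x => b (h x)).
apply: (@not_bij0 (fun x => a (b x)) (proj1 C_local)); last by exists h.
by move=> x; rewrite -[a (b x)]hK2 e0 (lin0 al).
Qed.

Lemma nonunit_opp f : nonunit f -> nonunit (fun x => - f x).
Proof. by move=> hf; apply: nonunit_compr hf (lin_opp (@lin_id _ C)). Qed.

Lemma nonunit_sub f g : nonunit f -> nonunit g -> nonunit (fun x => f x - g x).
Proof. by move=> hf hg; apply: nonunit_add => //; apply: nonunit_opp. Qed.

Lemma nonunit_sum (T : Type) (s : seq T) (P : pred T) (G : T -> C -> C) :
  (forall t, P t -> nonunit (G t)) -> nonunit (fun c => \sum_(t <- s | P t) G t c).
Proof.
move=> hG; elim: s => [|t s IH].
  by apply: (nonunit_ext nonunit0) => c; rewrite big_nil.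
case Pt: (P t).
  by apply: (nonunit_ext (nonunit_add (hG t Pt) IH)) => c; rewrite big_cons Pt.
by apply: (nonunit_ext IH) => c; rewrite big_cons Pt.
Qed.

Lemma local_End_indecomposable : indecomposable C.
Proof.
split; first exact: (proj1 C_local).
move=> N P [N0 [ND NZ]] [P0 [PD PZ]] NP dec.
have NN x : N x -> N (- x) by move/(NZ (-1)); rewrite scaleN1r.
have PN x : P x -> P (- x) by move/(PZ (-1)); rewrite scaleN1r.
have uniq_dec n p n' p' : N n -> P p -> N n' -> P p' -> n + p = n' + p' -> n = n'.
  move=> hn hp hn' hp' e; apply/eqP; rewrite -subr_eq0; apply/eqP; apply: NP.
    exact/ND/NN.
  have -> : n - n' = p' - p by rewrite -[n](addrK p) e addrC -(addrA n') addKr.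
  exact/PD/PN.
pose e x := projT1 (cid (dec x)).
have eN x : N (e x) /\ exists p, P p /\ x = e x + p.
  by rewrite /e; case: (cid (dec x)) => n /= [p [hn [hp ->]]]; split => //; exists p.
have eE x n p : N n -> P p -> x = n + p -> e x = n.
  move=> hn hp ex; case: (eN x) => hn' [p' [hp' ex']].
  by apply: (uniq_dec _ p' _ p) => //; rewrite -ex' -ex.
have el : lin e.
  split=> [x y|r x].
    case: (eN x) => hx [px [hpx ex]]; case: (eN y) => hy [py [hpy ey]].
    apply: (eE _ _ (px + py)); [exact: ND | exact: PD |].
    by rewrite {1}ex {1}ey addrACA.
  case: (eN x) => hx [px [hpx ex]].
  apply: (eE _ _ (r *: px)); [exact: NZ | exact: PZ |].
  by rewrite {1}ex scalerDr.
have ee x : e (e x) = e x by apply: (eE _ _ 0); [case: (eN x) | | rewrite addr0].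
have [H|H] := idempotent_id_or_0 el ee; [right | left] => m hm.
  by rewrite -(H m); apply: (eE _ 0 m); rewrite ?add0r.
by rewrite -(H m); symmetry; apply: (eE _ _ 0); rewrite ?addr0.
Qed.

(* Some entry [Y 0 l \o X l 0] is invertible, otherwise the (0,0) entry of
   [Y X] would be a nonunit; eliminating row 0 and column l with this pivot
   yields a factorisation of size (n-1, m-1). *)
Lemma le_of_id_factor_nonunit n m (Y : 'I_n -> 'I_m -> C -> C) (X : 'I_m -> 'I_n -> C -> C) :
  (forall k l, lin (Y k l)) -> (forall l k, lin (X l k)) ->
  (forall k k', nonunit (fun c => \sum_(l < m) Y k l (X l k' c) - (if k == k' then c else 0))) ->
  (n <= m)%N.
Proof.
elim: n m Y X => [|n IH] m Y X hY hX hJ; first by [].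
have [l0 hl0] : exists l0, ~ nonunit (fun c => Y ord0 l0 (X l0 ord0 c)).
  apply: contrapT => hn; apply: nonunit_idF.
  have hall l : nonunit (fun c => Y ord0 l (X l ord0 c)).
    by apply: contrapT => h; apply: hn; exists l.
  have hsum : nonunit (fun c => \sum_(l < m) Y ord0 l (X l ord0 c)).
    by apply: nonunit_sum => // l _; exact: hall.
  apply: (nonunit_ext (nonunit_sub hsum (hJ ord0 ord0))) => c.
  by rewrite eqxx opprB addrC subrK.
revert Y X hY hX hJ l0 hl0; case: m => [|m] Y X hY hX hJ l0 hl0; first by case: l0 hl0.
have [u' hu1 hu2] : bijective (Y ord0 l0).
  apply: bij_of_not_nonunit => // hJu; apply: hl0; exact: nonunit_compl hJu (hX _ _).
have hu' : lin u' by exact: lin_inv (hY _ _) hu1 hu2.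
rewrite ltnS; apply: (IH m (fun k l c => Y (lift ord0 k) (lift l0 l) c
    - Y (lift ord0 k) l0 (u' (Y ord0 (lift l0 l) c)))
   (fun l k => X (lift l0 l) (lift ord0 k))) => [k l|l k //|k k'].
  by apply: lin_sub => //; apply: lin_comp => //; exact: lin_comp.
set K := lift ord0 k; set K' := lift ord0 k'.
have lw : lin (fun c => Y K l0 (u' c)) by apply: lin_comp.
apply: (nonunit_ext (nonunit_sub (hJ K K') (nonunit_compr (hJ ord0 K') lw))) => c.
have -> : (K == K') = (k == k') by rewrite (inj_eq (@lift_inj _ ord0)).
rewrite (negbTE (neq_lift _ _)) subr0.
rewrite !(bigD1_ord l0) //= (proj1 hu') hu1 (proj1 (hY K l0)).
rewrite big_split /= sumrN -(lin_sum _ _ _ lw).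
set a := Y K l0 (X l0 K' c); set s := \sum_(i < m) Y K (lift l0 i) _.
by rewrite opprD addrA (addrC a s) (addrAC (s + a)) addrK addrAC.
Qed.

End LocalEndomorphisms.


Section Isomorphisms.
Variable S : pzRingType.

(* A chosen isomorphism and its inverse; both are 0 when M and N are not
   isomorphic. *)
Definition iso_fun (M N : lmodType S) : M -> N :=
  if pselect (mod_iso M N) is left H then projT1 (cid H) : M -> N else fun=> 0.
Arguments iso_fun : clear implicits.

Definition iso_inv (M N : lmodType S) : N -> M :=
  if pselect (exists g, cancel (iso_fun M N) g /\ cancel g (iso_fun M N)) is left H
  then projT1 (cid H) else fun=> 0.
Arguments iso_inv : clear implicits.

Lemma iso_funP (M N : lmodType S) : mod_iso M N ->
  [/\ lin (iso_fun M N), lin (iso_inv M N),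
      cancel (iso_fun M N) (iso_inv M N) & cancel (iso_inv M N) (iso_fun M N)].
Proof.
move=> H.
have [fl [g fK gK]] : lin (iso_fun M N) /\ bijective (iso_fun M N).
  rewrite /iso_fun; case: pselect => // H'; case: (cid H') => f /= fb.
  by split => //; split => *; rewrite ?raddfD ?linearZ.
have [c1 c2] : cancel (iso_fun M N) (iso_inv M N) /\ cancel (iso_inv M N) (iso_fun M N).
  rewrite /iso_inv; case: pselect => [H3|[]]; last by exists g.
  by case: (cid H3).
by split => //; apply: lin_inv fl c1 c2.
Qed.

Lemma mod_iso_of (M N : lmodType S) (f : M -> N) : lin f -> bijective f -> mod_iso M N.
Proof. by move=> fl fb; exists (linear_of fl). Qed.

Lemma mod_iso_refl (M : lmodType S) : mod_iso M M.
Proof. by apply: (mod_iso_of (@lin_id _ M)); exists id. Qed.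

Lemma mod_iso_sym (M N : lmodType S) : mod_iso M N -> mod_iso N M.
Proof. by move=> /iso_funP [_ gl fK gK]; apply: (mod_iso_of gl); exists (iso_fun M N). Qed.

Lemma mod_iso_trans (M N K : lmodType S) : mod_iso M N -> mod_iso N K -> mod_iso M K.
Proof.
move=> /iso_funP [l1 _ c1 c2] /iso_funP [l3 _ c3 c4].
apply: (mod_iso_of (lin_comp l1 l3)).
by exists (fun x => iso_inv M N (iso_inv N K x)) => x; rewrite ?c3 ?c1 ?c2 ?c4.
Qed.

(* The image of u is a nonzero direct summand of B. *)
Lemma split_mono_bij (C B : lmodType S) (u : C -> B) (v : B -> C) :
  (exists m : C, m != 0) -> indecomposable B -> lin u -> lin v -> cancel u v -> bijective u.
Proof.
move=> [m m0] [_ B_indec] ul vl uK.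
have el : lin (fun x => u (v x)) by apply: lin_comp.
have ee x : u (v (u (v x))) = u (v x) by rewrite uK.
have sN : submodule (fun x => u (v x) = x).
  split; first by rewrite (lin0 el).
  by split=> [x y hx hy|r x hx]; rewrite ?(proj1 el) ?(proj2 el) ?hx ?hy.
have sP : submodule (fun x => u (v x) = 0).
  split; first by rewrite (lin0 el).
  by split=> [x y hx hy|r x hx]; rewrite ?(proj1 el) ?(proj2 el) ?hx ?hy ?addr0 ?scaler0.
case: (B_indec _ _ sN sP) => [x hx hx0|x|H|H].
- by rewrite -hx hx0.
- exists (u (v x)), (x - u (v x)); split; first exact: ee.
  by rewrite (linB el) ee subrr addrC subrK.
- by move: m0; rewrite -(uK m) (H (u m)) ?(lin0 vl) ?eqxx ?uK.
- exists v => // x; apply/eqP; rewrite eq_sym -subr_eq0; apply/eqP.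
  by apply: H; rewrite (linB el) ee subrr.
Qed.

Lemma nonunit_factor_noniso (C B : lmodType S) (u : C -> B) (v : B -> C) :
  local_End C -> indecomposable B -> ~ mod_iso C B -> lin u -> lin v ->
  nonunit (fun c => v (u c)).
Proof.
move=> C_local B_indec CB ul vl; split; first exact: lin_comp.
move=> [h hK1 hK2]; apply: CB; apply: (mod_iso_of ul).
apply: (split_mono_bij (proj1 C_local) B_indec ul (v := fun y => h (v y))) => //.
by apply: lin_comp vl (lin_inv (lin_comp ul vl) hK1 hK2).
Qed.

(* Induction on F: if [a i0 \o b i0] is a nonunit of End(A i0), then
   [1 - a i0 \o b i0] is invertible, which lets us remove the term i0 from the
   decomposition of the identity. *)
Lemma iso_of_id_sum (I : Type) (A : I -> lmodType S) (B : lmodType S) (F : seq I)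
    (a : forall i, B -> A i) (b : forall i, A i -> B) :
  (forall i, local_End (A i)) -> indecomposable B ->
  (forall i, lin (a i)) -> (forall i, lin (b i)) ->
  (forall v, v = \sum_(i <- F) b i (a i v)) -> exists i, mod_iso (A i) B.
Proof.
move=> A_local B_indec; elim: F a => [|i0 F IH] a al bl hsum.
  by case: (proj1 B_indec) => m; rewrite (hsum m) big_nil eqxx.
pose u x := a i0 (b i0 x).
have ul : lin u by apply: lin_comp.
have [[w uK wK]|u_nonunit] := pselect (bijective u).
  exists i0; apply: (mod_iso_of (bl i0)).
  apply: (split_mono_bij (v := fun y => w (a i0 y)) (proj1 (A_local i0)) B_indec (bl i0)) => //.
  exact: lin_comp (al i0) (lin_inv ul uK wK).
have l1 : lin (fun x => x - u x) by apply: lin_sub => //; exact: lin_id.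
have [w w1 w2] : bijective (fun x => x - u x).
  apply: bij_of_not_nonunit => // hJ; apply: nonunit_idF.
  apply: nonunit_ext (nonunit_add (A_local i0) (conj ul u_nonunit) hJ) _ => x.
  by rewrite addrC subrK.
have wl : lin w by apply: lin_inv l1 w1 w2.
pose t v := v + b i0 (w (a i0 v)).
have tl : lin t.
  by apply: lin_add; [exact: lin_id | apply: lin_comp (lin_comp (al i0) wl) (bl i0)].
have tK v : t v - b i0 (a i0 (t v)) = v.
  rewrite /t (proj1 (al i0)) (proj1 (bl i0)).
  have -> : b i0 (a i0 v) = b i0 (w (a i0 v)) - b i0 (a i0 (b i0 (w (a i0 v)))).
    by rewrite -(linB (bl i0)); congr (b i0); rewrite -[LHS]w2.
  by rewrite subrK addrK.
apply: (IH (fun i v => a i (t v))) => // [i|v]; first exact: lin_comp.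
by rewrite -{1}(tK v) {1}(hsum (t v)) big_cons addrC addKr.
Qed.

End Isomorphisms.
Arguments iso_fun {S} M N.
Arguments iso_inv {S} M N.

Section Single.
Variables (S : pzRingType) (I : Type) (A : I -> lmodType S).

Definition single (l : I) (v : A l) : forall i, A i :=
  fun i => if pselect (l = i) is left e then eq_rect l A v i e else 0.

Lemma single_id l (v : A l) : single v l = v.
Proof. by rewrite /single; case: pselect => // e; rewrite (Prop_irrelevance e erefl). Qed.

Lemma single_ne l (v : A l) i : l <> i -> single v i = 0.
Proof. by rewrite /single; case: pselect. Qed.

Lemma single_add l (a b : A l) : single (a + b) = (fun i => single a i + single b i).
Proof.
apply: functional_extensionality_dep => i; rewrite /single.
by case: pselect => [e|_]; [case: i / e | rewrite addr0].
Qed.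

Lemma single_scale l (r : S) (a : A l) : single (r *: a) = (fun i => r *: single a i).
Proof.
apply: functional_extensionality_dep => i; rewrite /single.
by case: pselect => [e|_]; [case: i / e | rewrite scaler0].
Qed.

End Single.

Lemma exists_NoDup_In_iff (T : Type) (s : seq T) :
  exists s', List.NoDup s' /\ forall x, List.In x s <-> List.In x s'.
Proof.
elim: s => [|a s [s' [nd hs']]]; first by exists nil; split => //; constructor.
have [ha|ha] := pselect (List.In a s').
  by exists s'; split => // x; split => [[<-|/hs']|/hs'] //; right.
exists (a :: s'); split; first by constructor.
by move=> x; split => [[<-|/hs']|[<-|/hs']]; by [left | right].
Qed.

Section Los.
Variables (R : pzRingType) (I : Type) (A : I -> lmodType R^c) (M : lmodType R^c).
Variable g : (forall i, A i) -> M.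
Hypothesis gD : forall x y, g (fun i => x i + y i) = g x + g y.
Hypothesis gZ : forall (r : R) x, g (fun i => (r : R^c) *: x i) = (r : R^c) *: g x.
Hypothesis M_slender : slender M.

Definition negligible (X : I -> Prop) :=
  forall x : forall i, A i, (forall i, ~ X i -> x i = 0) -> g x = 0.

Definition restrict (X : I -> Prop) (x : forall i, A i) : forall i, A i :=
  fun i => if pselect (X i) then x i else 0.

Lemma g0 : g (fun i => 0) = 0.
Proof.
apply: (addrI (g (fun i => 0))); rewrite -gD addr0; congr g.
by apply: functional_extensionality_dep => i; rewrite addr0.
Qed.

Lemma g_restrictC X x : g x = g (restrict X x) + g (restrict (fun i => ~ X i) x).
Proof.
rewrite -gD; congr g; apply: functional_extensionality_dep => i; rewrite /restrict.
by case: pselect => h1; case: pselect => h2 //; rewrite ?addr0 ?add0r.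
Qed.

Lemma negligible_sub (X Y : I -> Prop) : (forall i, X i -> Y i) -> negligible Y -> negligible X.
Proof. by move=> sXY hY x hx; apply: hY => i hi; apply: hx => /sXY. Qed.

Lemma negligible_union X Y : negligible X -> negligible Y -> negligible (fun i => X i \/ Y i).
Proof.
move=> hX hY x hx; rewrite (g_restrictC X x) hX ?hY ?addr0 // => i hi; rewrite /restrict.
  by case: pselect => // h; apply: hx => -[].
by case: pselect => // h; apply: hx => -[].
Qed.

(* Otherwise pick x_n supported on the n-th tail with g x_n <> 0; slenderness
   applied to [r |-> g (sum_{k <= c i} r_k x_k)] forces g x_n = 0 for large n. *)
Lemma negligible_tail (c : I -> option nat) :
  exists n0, negligible (fun i => exists n, c i = Some n /\ (n0 <= n)%N).
Proof.
apply: contrapT => H.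
have witness n0 : exists x : forall i, A i,
    (forall i, ~ (exists n, c i = Some n /\ (n0 <= n)%N) -> x i = 0) /\ g x <> 0.
  apply: contrapT => hn; apply: H; exists n0 => x hx.
  by apply: contrapT => gx; apply: hn; exists x.
have [xs hxs] := choice witness.
pose h (r : nat -> R) : M := g (fun i =>
  if c i is Some n then \sum_(k < n.+1) (r k : R^c) *: xs k i else 0).
have [n0 hn0] : exists n0 : nat, forall n, (n0 <= n)%N -> h (unit_vec R n) = 0.
  apply: M_slender => [x y|x r]; rewrite /h -?gD -?gZ; congr g;
    apply: functional_extensionality_dep => i; case: (c i) => [n|];
    rewrite ?addr0 ?scaler0 // ?scaler_sumr -?big_split; apply: eq_bigr => k _.
    by rewrite scalerDl.
  by rewrite scalerA.
apply: (proj2 (hxs n0)); rewrite -(hn0 n0 (leqnn n0)); congr g.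
apply: functional_extensionality_dep => i.
have xs0 := proj1 (hxs n0) i.
case E: (c i) => [n|]; last by rewrite xs0 // => -[n []]; rewrite E.
have [hle|hlt] := leqP n0 n; last first.
  rewrite xs0 => [|[m []]]; last by rewrite E => -[<-]; rewrite leqNgt hlt.
  rewrite big1 // => k _; rewrite /unit_vec; case: eqP => [ek|_]; last by rewrite scale0r.
  by move: (ltn_ord k); rewrite ek ltnS leqNgt hlt.
rewrite (bigD1 (Ordinal (hle : (n0 < n.+1)%N))) //= /unit_vec eqxx scale1r big1 ?addr0 //.
move=> k hk; case: eqP => ek; last by rewrite scale0r.
by move: hk; rewrite -(inj_eq val_inj) /= ek eqxx.
Qed.

Lemma negligible_bounded (c : I -> option nat) n0 :
  (forall n, negligible (fun i => c i = Some n)) ->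
  negligible (fun i => exists n, c i = Some n /\ (n < n0)%N).
Proof.
move=> hs; elim: n0 => [|n0 IH].
  move=> x hx; rewrite -g0; congr g.
  by apply: functional_extensionality_dep => i; apply: hx => -[n []].
apply: negligible_sub (negligible_union IH (hs n0)) => i [n [hn]].
by rewrite ltnS leq_eqVlt => /orP [/eqP <-|hlt]; [right | left; exists n].
Qed.

Lemma negligible_countable_union (c : I -> option nat) :
  (forall n, negligible (fun i => c i = Some n)) -> negligible (fun i => exists n, c i = Some n).
Proof.
move=> hs; have [n0 hn0] := negligible_tail c.
pose T i := exists n, c i = Some n /\ (n0 <= n)%N.
apply: negligible_sub (negligible_union hn0 (negligible_bounded (n0 := n0) hs)) => i [n cn].
by have [le|lt] := leqP n0 n; [left | right]; exists n.
Qed.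

Lemma negligible_some_fibre (c : I -> option nat) : exists n, negligible (fun i => c i = Some n).
Proof.
have [n0 hn0] := negligible_tail c; exists n0.
by apply: negligible_sub hn0 => i cn; exists n0.
Qed.

Definition essential (X : I -> Prop) :=
  forall F : seq I, ~ negligible (fun i => X i /\ ~ List.In i F).

Lemma essential_diff X Y : essential X -> ~ essential (fun i => X i /\ Y i) ->
  essential (fun i => X i /\ ~ Y i).
Proof.
move=> hX hXY F hF.
have [F1 hF1] : exists F1, negligible (fun i => (X i /\ Y i) /\ ~ List.In i F1).
  by apply: contrapT => hn; apply: hXY => F1 h1; apply: hn; exists F1.
apply: (hX (F1 ++ F)); apply: negligible_sub (negligible_union hF1 hF) => i [hx].
rewrite List.in_app_iff => hi.
by case: (pselect (Y i)) => hy; [left | right]; split; tauto.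
Qed.

(* Otherwise one could split off, forever, non-negligible pieces
   [S k /\ T k] of a decreasing sequence of essential sets S k; the pieces are
   disjoint, contradicting [negligible_some_fibre]. *)
Lemma essential_atom : essential (fun _ => True) ->
  exists X, essential X /\
    forall Y, negligible (fun i => X i /\ Y i) \/ negligible (fun i => X i /\ ~ Y i).
Proof.
move=> essT; apply: contrapT => noatom.
have split_off X : exists Y, essential X ->
    ~ negligible (fun i => X i /\ Y i) /\ essential (fun i => X i /\ ~ Y i).
  have [eX|] := pselect (essential X); last by exists (fun _ => True).
  have [Y [hY1 hY2]] : exists Y, ~ negligible (fun i => X i /\ Y i) /\
      ~ negligible (fun i => X i /\ ~ Y i).
    apply: contrapT => hn; apply: noatom; exists X; split => // Y.
    apply: contrapT => hn'; apply: hn; exists Y; split => h; apply: hn'; tauto.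
  have [eXY|neXY] := pselect (essential (fun i => X i /\ ~ Y i)); first by exists Y.
  exists (fun i => ~ Y i) => _; split; last exact: essential_diff.
  by apply: contra_not hY2; apply: negligible_sub => i [].
have [st hst] := choice split_off.
pose S k := iter k (fun X i => X i /\ ~ st X i) (fun _ => True).
have essS k : essential (S k) by elim: k => [|k IH] //=; exact: (proj2 (hst _ IH)).
pose T k i := S k i /\ st (S k) i.
have S_decr k k' i : (k <= k')%N -> S k' i -> S k i.
  move/subnK <-; elim: (k' - k)%N => [|d IH] //.
  by rewrite addSn => -[/IH].
have T_disj k k' i : T k i -> T k' i -> k = k'.
  have T_lt m m' : (m < m')%N -> T m i -> T m' i -> False.
    by move=> lt [_ hm] [hm' _]; case: (S_decr _ _ i lt hm').
  move=> h1 h2; case: (ltngtP k k') => // lt.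
    by case: (T_lt _ _ lt h1 h2).
  by case: (T_lt _ _ lt h2 h1).
pose c i := if pselect (exists k, T k i) is left H then Some (projT1 (cid H)) else None.
have cT n i : T n i -> c i = Some n.
  move=> hn; rewrite /c; case: pselect => [H3|nH]; last by case: nH; exists n.
  by case: (cid H3) => k /= hk; rewrite (T_disj _ _ _ hk hn).
have [n hn] := negligible_some_fibre c.
by apply: (proj1 (hst _ (essS n))); apply: negligible_sub hn => i /cT.
Qed.

Section Atom.
Variable X : I -> Prop.
Hypothesis X_nonnegl : ~ negligible X.
Hypothesis X_atom :
  forall Y, negligible (fun i => X i /\ Y i) \/ negligible (fun i => X i /\ ~ Y i).

Definition atom_filter (Z : I -> Prop) := ~ negligible (fun i => X i /\ Z i).

Lemma atom_filterC Z : atom_filter Z -> negligible (fun i => X i /\ ~ Z i).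
Proof. by case: (X_atom Z). Qed.

Lemma atom_ultrafilter : ultrafilter atom_filter.
Proof.
split.
  apply=> x hx; rewrite -g0; congr g.
  by apply: functional_extensionality_dep => i; apply: hx => -[].
split; first by move=> Z W hZ ZW hs; apply: hZ; apply: negligible_sub hs => i [? /ZW].
split.
  move=> Z W hZ hW hs; apply: hZ.
  apply: negligible_sub (negligible_union hs (atom_filterC hW)) => i [xi zi].
  by case: (pselect (W i)) => wi; [left | right].
move=> Z; have [hZ|hZ] := pselect (atom_filter Z); [by left | right => hs].
apply: X_nonnegl; apply: negligible_sub (negligible_union hs (contrapT hZ)) => i xi.
by case: (pselect (Z i)) => zi; [right | left].
Qed.

Lemma atom_countably_complete : countably_complete atom_filter.
Proof.
move=> Z hZ.
pose c i := if pselect (X i /\ exists n, ~ Z n i) is left H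
  then Some (projT1 (cid (proj2 H))) else None.
have hc n i : c i = Some n -> X i /\ ~ Z n i.
  rewrite /c; case: pselect => // H [<-].
  by case: (cid (proj2 H)) => k /= hk; split => //; exact: proj1 H.
have sc : negligible (fun i => exists n, c i = Some n).
  by apply: negligible_countable_union => n; apply: negligible_sub (atom_filterC (hZ n)) => i /hc.
move=> hs; apply: X_nonnegl; apply: negligible_sub (negligible_union hs sc) => i xi.
have [hz|hz] := pselect (forall n, Z n i); [by left | right].
rewrite /c; case: pselect => [H3|[]]; first by eexists.
by split => //; apply: contrapT => hn; apply: hz => n; apply: contrapT => hzn; apply: hn; exists n.
Qed.

End Atom.

(* Łoś.  An essential atom X yields the countably complete ultrafilter
   [atom_filter X], which is principal at some i0; then X minus {i0} is
   negligible, so X is not essential. *)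
Theorem slender_finite_support : nonmeasurable I ->
  exists F : seq I, forall x : forall i, A i, (forall i, List.In i F -> x i = 0) -> g x = 0.
Proof.
move=> I_nonmeas; apply: contrapT => H.
have [X [essX X_atom]] : exists X, essential X /\
    forall Y, negligible (fun i => X i /\ Y i) \/ negligible (fun i => X i /\ ~ Y i).
  apply: essential_atom => F hF; apply: H; exists F => x hx; apply: hF => i hi.
  by apply: hx; apply: contrapT => hn; apply: hi.
have X_nonnegl : ~ negligible X by move=> hs; apply: (essX nil); apply: negligible_sub hs => i [].
have [i0 hi0] := I_nonmeas _ (atom_ultrafilter X_nonnegl X_atom)
  (atom_countably_complete X_nonnegl X_atom).
have hs : negligible (fun i => X i /\ i <> i0).
  by apply: contrapT => /(proj1 (hi0 (fun i => i <> i0))).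
apply: (essX [:: i0]); apply: negligible_sub hs => i [xi hi]; split => // e.
by apply: hi; left.
Qed.

Lemma finite_support_sum (F : seq I) : List.NoDup F ->
  (forall x : forall i, A i, (forall i, List.In i F -> x i = 0) -> g x = 0) ->
  forall x, g x = \sum_(l <- F) g (single (x l)).
Proof.
move=> nd F_supp x.
rewrite (g_restrictC (fun i => List.In i F) x) [X in _ + X]F_supp ?addr0;
  last by move=> i hi; rewrite /restrict; case: pselect.
elim: F nd {F_supp} => [|a F IH] nd.
  rewrite big_nil -g0; congr g; apply: functional_extensionality_dep => i.
  by rewrite /restrict; case: pselect.
inversion nd as [|a' F' aF nd']; subst.
rewrite big_cons -IH // -gD; congr g; apply: functional_extensionality_dep => i.
rewrite /restrict; have [ai|ai] := pselect (a = i).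
  subst i; rewrite single_id.
  case: pselect => [aIn|nIn] /=; last by case: nIn; left.
  by case: pselect => [aF'|naF] /=; rewrite ?addr0.
rewrite single_ne // add0r.
case: pselect => [iaF|niaF]; case: pselect => [iF|niF] //=.
  by case: iaF => [/ai|/niF].
by case: niaF; right.
Qed.

End Los.

Section SeqIn.
Variable T : Type.

Lemma In_nth (s : seq T) x0 n : (n < size s)%N -> List.In (nth x0 s n) s.
Proof. by elim: s n => [|a s IH] [|n] //= h; [left | right; exact: IH]. Qed.

Lemma NoDup_nth_inj (s : seq T) x0 n n' : List.NoDup s -> (n < size s)%N -> (n' < size s)%N ->
  nth x0 s n = nth x0 s n' -> n = n'.
Proof.
elim: s n n' => [|a s IH] [|n] [|n'] //= nd h h'; inversion nd as [|? ? ns nd']; subst.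
- by move=> e; case: ns; rewrite e; exact: In_nth.
- by move=> e; case: ns; rewrite -e; exact: In_nth.
- by move=> /(IH _ _ nd' h h') ->.
Qed.

Lemma In_filter (p : pred T) (s : seq T) x : List.In x (filter p s) <-> List.In x s /\ p x.
Proof.
elim: s => [|a s IH] /=; first by split => -[].
case pa: (p a) => /=.
  split => [[<-|/IH [h1 h2]]|[[<-|h1] h2]];
    by [split; [left|] | split; [right|] | left | right; apply/IH].
split => [/IH [h1 h2]|[[ea|h1] h2]]; [by split; [right|] | | by apply/IH].
by subst; rewrite pa in h2.
Qed.

Lemma NoDup_filter (p : pred T) (s : seq T) : List.NoDup s -> List.NoDup (filter p s).
Proof.
elim: s => [|a s IH] //= nd; inversion nd; subst.
case: (p a); last exact: IH.
by constructor; [move/In_filter => [] | exact: IH].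
Qed.

End SeqIn.

Definition list_bounded (I J : Type) (SI : I -> Prop) (SJ : J -> Prop) :=
  forall L : seq I, List.NoDup L -> (forall i, List.In i L -> SI i) ->
  exists L' : seq J, [/\ List.NoDup L', forall j, List.In j L' -> SJ j & (size L <= size L')%N].

Section ProductIsomorphism.
Variables (R : pzRingType) (I J : Type) (A : I -> lmodType R^c) (B : J -> lmodType R^c).
Variables (phi : (forall i, A i) -> (forall j, B j)) (psi : (forall j, B j) -> (forall i, A i)).
Hypothesis phiK : cancel phi psi.
Hypothesis psiK : cancel psi phi.
Hypothesis phiD : forall x y, phi (fun i => x i + y i) = (fun j => phi x j + phi y j).
Hypothesis phiZ :
  forall (r : R) x, phi (fun i => (r : R^c) *: x i) = (fun j => (r : R^c) *: phi x j).

Lemma psiD y z : psi (fun j => y j + z j) = (fun i => psi y i + psi z i).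
Proof. by rewrite -{1}[y]psiK -{1}[z]psiK -phiD phiK. Qed.

Lemma psiZ (r : R) y : psi (fun j => (r : R^c) *: y j) = (fun i => (r : R^c) *: psi y i).
Proof. by rewrite -{1}[y]psiK -phiZ phiK. Qed.

Lemma lin_psi_single j i : lin (fun b : B j => psi (single b) i).
Proof. by split=> [a b|r a]; rewrite ?single_add ?single_scale ?psiD ?psiZ. Qed.

Lemma lin_phi_single i j : lin (fun a : A i => phi (single a) j).
Proof. by split=> [a b|r a]; rewrite ?single_add ?single_scale ?phiD ?phiZ. Qed.

Lemma psi_finite_support : (forall i, slender (A i)) -> nonmeasurable J ->
  forall L : seq I, exists F : seq J, List.NoDup F /\
    forall k, List.In k L -> forall y, psi y k = \sum_(j <- F) psi (single (y j)) k.
Proof.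
move=> A_slender J_nonmeas L.
have psikD k y z : psi (fun j => y j + z j) k = psi y k + psi z k by rewrite psiD.
have psikZ k (r : R) y : psi (fun j => (r : R^c) *: y j) k = (r : R^c) *: psi y k.
  by rewrite psiZ.
have [Fs hFs] := choice (fun k => slender_finite_support (g := fun y => psi y k)
  (psikD k) (psikZ k) (A_slender k) J_nonmeas).
have [F [ndF hF]] := exists_NoDup_In_iff (List.concat (List.map Fs L)).
exists F; split => // k kL.
apply: (finite_support_sum (g := fun y => psi y k) (psikD k) ndF) => y hy.
apply: hFs => j jk; apply/hy/hF/List.in_concat; exists (Fs k); split => //.
exact: List.in_map.
Qed.

(* With F a common finite support of the coordinates of psi on L, the maps
   C ~ A k -> B j ~ C (j in F, B j ~ C) and back form matrices whose product is
   the identity modulo nonunits: the terms through B j not isomorphic to C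
   are nonunits by [nonunit_factor_noniso]. *)
Lemma iso_count_le (C : lmodType R^c) :
  (forall i, slender (A i)) -> nonmeasurable J -> (forall j, indecomposable (B j)) ->
  local_End C -> list_bounded (fun i => mod_iso C (A i)) (fun j => mod_iso C (B j)).
Proof.
move=> A_slender J_nonmeas B_indec C_local L ndL isoL.
have [F [ndF psi_sum]] := psi_finite_support A_slender J_nonmeas L.
pose P j := `[< mod_iso C (B j) >].
pose FC := filter P F.
have FCiso j : List.In j FC -> mod_iso C (B j) by move=> /In_filter [_ /asboolP].
exists FC; split => //; first exact: NoDup_filter.
pose ik (k : 'I_(size L)) := tnth (in_tuple L) k.
pose jl (l : 'I_(size FC)) := tnth (in_tuple FC) l.
have ikL k : List.In (ik k) L by rewrite /ik (tnth_nth (ik k)); apply: In_nth.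
have ik_inj k k' : ik k = ik k' -> k = k'.
  rewrite /ik !(tnth_nth (ik k)) => e.
  by apply: val_inj; apply: (NoDup_nth_inj ndL (ltn_ord k) (ltn_ord k') e).
pose thF i := iso_fun C (A i); pose thG i := iso_inv C (A i).
pose taF j := iso_fun C (B j); pose taG j := iso_inv C (B j).
have thS k := iso_funP (isoL _ (ikL k)).
have taS l : [/\ lin (taF (jl l)), lin (taG (jl l)), cancel (taF (jl l)) (taG (jl l))
    & cancel (taG (jl l)) (taF (jl l))].
  by apply/iso_funP/FCiso; rewrite /jl (tnth_nth (jl l)); apply: In_nth.
pose Y k l c := thG (ik k) (psi (single (taF (jl l) c)) (ik k)).
pose X l k c := taG (jl l) (phi (single (thF (ik k) c)) (jl l)).
apply: (le_of_id_factor_nonunit C_local (Y := Y) (X := X)) => [k l|l k|k k'].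
- have [_ l2 _ _] := thS k; have [l3 _ _ _] := taS l.
  by apply: lin_comp l2; apply: lin_comp l3 (lin_psi_single _ _).
- have [l1 _ _ _] := thS k; have [_ l4 _ _] := taS l.
  by apply: lin_comp l4; apply: lin_comp l1 (lin_phi_single _ _).
have [l1 l2 h1 h2] := thS k; have [l1' l2' h1' h2'] := thS k'.
pose G j c := thG (ik k) (psi (single (phi (single (thF (ik k') c)) j)) (ik k)).
have sumFC c : \sum_(l < size FC) Y k l (X l k' c) = \sum_(j <- F | P j) G j c.
  rewrite -[RHS]big_filter -/FC [RHS]big_tnth; apply: eq_bigr => l _.
  by rewrite /Y /X /G -/(jl l); case: (taS l) => _ _ _ ->.
have sumF c : \sum_(j <- F) G j c = if k == k' then c else 0.
  rewrite /G -(lin_sum _ _ _ l2) -psi_sum ?phiK //.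
  case: eqP => [<-|nkk]; first by rewrite single_id h1.
  by rewrite single_ne ?(lin0 l2) // => /ik_inj/esym.
have sum_nonP : nonunit (fun c => \sum_(j <- F | ~~ P j) G j c).
  apply: nonunit_sum => // j /asboolP nPj.
  apply: (nonunit_factor_noniso (u := fun c => phi (single (thF (ik k') c)) j)
    (v := fun b => thG (ik k) (psi (single b) (ik k))) C_local (B_indec j) nPj).
    exact: lin_comp l1' (lin_phi_single _ _).
  exact: lin_comp (lin_psi_single _ _) l2.
apply: (nonunit_ext (nonunit_opp C_local sum_nonP)) => c.
by rewrite sumFC -sumF [X in _ = _ - X](bigID P) /= opprD addrA subrr add0r.
Qed.

Lemma B_iso_some_A : (forall i, local_End (A i)) -> (forall j, slender (B j)) ->
  (forall j, indecomposable (B j)) -> nonmeasurable I -> forall j, exists i, mod_iso (A i) (B j).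
Proof.
move=> A_local B_slender B_indec I_nonmeas j.
have phijD x y : phi (fun i => x i + y i) j = phi x j + phi y j by rewrite phiD.
have phijZ (r : R) x : phi (fun i => (r : R^c) *: x i) j = (r : R^c) *: phi x j.
  by rewrite phiZ.
have [F0 hF0] := slender_finite_support phijD phijZ (B_slender j) I_nonmeas.
have [F [ndF hF]] := exists_NoDup_In_iff F0.
have phi_sum := finite_support_sum phijD ndF
  (fun x hx => hF0 x (fun i hi => hx i (proj1 (hF i) hi))).
apply: (iso_of_id_sum (F := F) A_local (B_indec j) (lin_psi_single j) (lin_phi_single ^~ j)) => v.
by rewrite -(phi_sum (psi (single v))) psiK single_id.
Qed.

End ProductIsomorphism.

Local Close Scope ring_scope.

Section Rank.
Variable G : nat -> Prop.

Definition rank (x : nat) := count (fun y => `[< G y >]) (iota 0 x).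

Lemma rankS x : rank x.+1 = rank x + `[< G x >].
Proof. by rewrite /rank -addn1 iotaD count_cat /= addn0. Qed.

Lemma rank_lt x y : G x -> x < y -> rank x < rank y.
Proof.
move=> Gx /subnK <-; elim: (y - x.+1) => [|d IH]; first by rewrite rankS asboolT ?addn1.
by rewrite addSn rankS (leq_trans IH) ?leq_addr.
Qed.

Lemma rank_inj x y : G x -> G y -> rank x = rank y -> x = y.
Proof.
move=> Gx Gy e; case: (ltngtP x y) => // h.
  by move: (rank_lt Gx h); rewrite e ltnn.
by move: (rank_lt Gy h); rewrite e ltnn.
Qed.

Lemma rank_down x k : k < rank x -> exists y, G y /\ rank y = k.
Proof.
elim: x k => [|x IH] k //; rewrite rankS.
case: (asboolP (G x)) => Gx; rewrite ?addn1 ?addn0 => hk; last exact: IH.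
by move: hk; rewrite ltnS leq_eqVlt => /orP [/eqP ->|/IH]; [exists x|].
Qed.

Lemma rank_ge (s : seq nat) x : uniq s -> (forall y, y \in s -> G y /\ y < x) ->
  size s <= rank x.
Proof.
move=> us hs; rewrite /rank -size_filter; apply: uniq_leq_size => // y /hs [Gy hy].
by rewrite mem_filter mem_iota add0n hy asboolT.
Qed.

Lemma rank_of_list (s : seq nat) k : uniq s -> (forall y, y \in s -> G y) -> size s = k.+1 ->
  exists y, G y /\ rank y = k.
Proof.
move=> us hs hsz; apply: (@rank_down (\max_(y <- s) y).+1).
rewrite -hsz; apply: rank_ge => // y ys; split; first exact: hs.
by rewrite ltnS (@leq_bigmax_seq _ s xpredT (fun y => y) y).
Qed.

Lemma list_of_rank x : G x ->
  exists s : seq nat, [/\ uniq s, forall y, y \in s -> G y & size s = (rank x).+1].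
Proof.
move=> Gx; exists (filter (fun y => `[< G y >]) (iota 0 x.+1)); split.
- exact/filter_uniq/iota_uniq.
- by move=> y; rewrite mem_filter => /andP [/asboolP].
- by rewrite size_filter -/(rank x.+1) rankS asboolT ?addn1.
Qed.

End Rank.

Definition size_bounded (P Q : nat -> Prop) := forall s : seq nat, uniq s ->
  (forall y, y \in s -> P y) ->
  exists s' : seq nat, [/\ uniq s', forall y, y \in s' -> Q y & size s <= size s'].

Lemma rank_match (P Q : nat -> Prop) x : size_bounded P Q -> P x ->
  exists y, Q y /\ rank Q y = rank P x.
Proof.
move=> PQ Px; have [s [us sP hsz]] := list_of_rank Px.
have [s' [us' s'Q hsz']] := PQ s us sP.
apply: (@rank_of_list _ (take (rank P x).+1 s')).
- exact: take_uniq.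
- by move=> y /mem_take; apply: s'Q.
- by rewrite size_takel // -hsz.
Qed.

Lemma mem_map_In (T : Type) (g : T -> nat) (L : seq T) n :
  n \in map g L -> exists2 t, List.In t L & g t = n.
Proof.
elim: L => [|a L IH] //=; rewrite inE => /orP [/eqP ->|/IH [b bL <-]].
  by exists a; first left.
by exists b; first right.
Qed.

Lemma In_map_mem (T : Type) (g : T -> nat) (L : seq T) t :
  List.In t L -> g t \in map g L.
Proof. by elim: L => //= a L IH [->|/IH]; rewrite inE ?eqxx // => ->; rewrite orbT. Qed.

Section Coding.
Variables (T : Type) (S : T -> Prop) (g : T -> nat).

Definition coded (n : nat) := exists t, S t /\ g t = n.

Lemma code_list (L : seq T) : (forall t1 t2, S t1 -> S t2 -> g t1 = g t2 -> t1 = t2) ->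
  List.NoDup L -> (forall t, List.In t L -> S t) ->
  [/\ uniq (map g L), forall n, n \in map g L -> coded n & size (map g L) = size L].
Proof.
move=> g_inj; elim: L => [|a L IH] nd LS; first by [].
inversion nd as [|? ? aL nd']; subst.
have LS' t : List.In t L -> S t by move=> tL; apply: LS; right.
have [uL codedL _] := IH nd' LS'.
split; last by rewrite size_map.
- rewrite /= uL andbT; apply/negP => /mem_map_In [b bL e].
  by apply: aL; rewrite -(g_inj b a) //; [exact: LS' | apply: LS; left].
- move=> n; rewrite /= inE => /orP [/eqP ->|/codedL //].
  by exists a; split => //; apply: LS; left.
Qed.

Lemma decode_list (s : seq nat) : uniq s -> (forall n, n \in s -> coded n) ->
  exists L : seq T, [/\ List.NoDup L, forall t, List.In t L -> S t & map g L = s].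
Proof.
elim: s => [|a s IH] /=; first by exists nil; split => //; constructor.
move=> /andP [as_ us] hs.
have [L [nd LS eL]] :
    exists L : seq T, [/\ List.NoDup L, forall t, List.In t L -> S t & map g L = s].
  by apply: IH us _ => n ns; apply: hs; rewrite inE ns orbT.
have [t [St ta]] := hs a (mem_head _ _).
exists (t :: L); split => /=; last by rewrite eL ta.
- constructor => // tL; move/negP: as_; apply.
  by rewrite -eL -ta; apply: In_map_mem.
- by move=> u [<-|/LS].
Qed.

End Coding.

Lemma size_bounded_coded (I J : Type) (SI : I -> Prop) (SJ : J -> Prop)
    (gI : I -> nat) (gJ : J -> nat) :
  (forall j1 j2, SJ j1 -> SJ j2 -> gJ j1 = gJ j2 -> j1 = j2) ->
  list_bounded SI SJ -> size_bounded (coded SI gI) (coded SJ gJ).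
Proof.
move=> gJ_inj bnd s us sC.
have [L [nd LS <-]] := decode_list us sC.
have [L' [nd' L'S hsz]] := bnd L nd LS.
have [u' c' sz'] := code_list gJ_inj nd' L'S.
by exists (map gJ L'); split; rewrite // sz' size_map.
Qed.

Section Matching.
Variables (I J : Type) (SI : I -> Prop) (SJ : J -> Prop) (gI : I -> nat) (gJ : J -> nat).
Hypothesis gI_inj : forall i1 i2, SI i1 -> SI i2 -> gI i1 = gI i2 -> i1 = i2.
Hypothesis gJ_inj : forall j1 j2, SJ j1 -> SJ j2 -> gJ j1 = gJ j2 -> j1 = j2.

(* Match i with the j whose code has the same rank among the codes of SJ as
   the code of i among the codes of SI. *)
Lemma list_bounded_bijection (j0 : J) : list_bounded SI SJ -> list_bounded SJ SI ->
  exists f : I -> J, [/\ forall i, SI i -> SJ (f i),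
    forall i1 i2, SI i1 -> SI i2 -> f i1 = f i2 -> i1 = i2 &
    forall j, SJ j -> exists2 i, SI i & f i = j].
Proof.
move=> bIJ bJI.
pose CI := coded SI gI; pose CJ := coded SJ gJ.
have match_rank i : SI i -> exists j, SJ j /\ rank CJ (gJ j) = rank CI (gI i).
  move=> Si; have CIi : CI (gI i) by exists i.
  have [_ [[j [Sj <-]] e]] := rank_match (size_bounded_coded gJ_inj bIJ) CIi.
  by exists j.
pose f i := if pselect (exists j, SJ j /\ rank CJ (gJ j) = rank CI (gI i)) is left H
  then projT1 (cid H) else j0.
have fP i : SI i -> SJ (f i) /\ rank CJ (gJ (f i)) = rank CI (gI i).
  by move=> Si; rewrite /f; case: pselect => [H|[]]; [case: (cid H) | exact: match_rank].
have CJf i : SI i -> CJ (gJ (f i)) by move=> Si; exists (f i); split => //; case: (fP i Si).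
exists f; split => [i Si|i1 i2 S1 S2 e|j Sj]; first by case: (fP i Si).
  apply: gI_inj => //; apply: (rank_inj (G := CI)); [by exists i1 | by exists i2 |].
  by rewrite -(proj2 (fP i1 S1)) -(proj2 (fP i2 S2)) e.
have CJj : CJ (gJ j) by exists j.
have [_ [[i [Si <-]] ei]] := rank_match (size_bounded_coded gI_inj bJI) CJj.
exists i => //; apply: gJ_inj => //; first by case: (fP i Si).
apply: (rank_inj (G := CJ)); [exact: CJf | by exists j |].
by rewrite (proj2 (fP i Si)) ei.
Qed.

End Matching.

Local Open Scope ring_scope.

Section GlueClasses.
Variables (I J : Type) (E : I -> I -> Prop) (K : I -> J -> Prop).
Hypothesis E_refl : forall i, E i i.
Hypothesis E_sym : forall i i', E i i' -> E i' i.
Hypothesis E_trans : forall i1 i2 i3, E i1 i2 -> E i2 i3 -> E i1 i3.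
Hypothesis K_E : forall i i' j, E i i' -> K i' j -> K i j.
Hypothesis E_K : forall i i' j, K i j -> K i' j -> E i i'.

Definition class_rep (i : I) : I := projT1 (cid (ex_intro (E i) i (E_refl i))).

Lemma class_repE i : E i (class_rep i).
Proof. by rewrite /class_rep; case: cid. Qed.

Lemma class_rep_eq i i' : E i i' -> class_rep i = class_rep i'.
Proof.
move=> e; have EE : E i = E i'.
  apply: funext => x; apply: propext; split; [exact: E_trans (E_sym e) | exact: E_trans e].
rewrite /class_rep; move: (ex_intro (E i) i _) (ex_intro (E i') i' _).
by rewrite EE => h1 h2; rewrite (Prop_irrelevance h1 h2).
Qed.

Lemma glue_class_bijections :
  (forall j, exists i, K i j) ->
  (forall i, exists f : I -> J, [/\ forall i', E i i' -> K i (f i'),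
    forall i1 i2, E i i1 -> E i i2 -> f i1 = f i2 -> i1 = i2 &
    forall j, K i j -> exists2 i', E i i' & f i' = j]) ->
  exists sigma : I -> J, bijective sigma /\ forall i, K i (sigma i).
Proof.
move=> K_surj class_bij; have [fs hfs] := choice class_bij.
pose sigma i := fs (class_rep i) i.
have repE' i : E (class_rep i) i by exact/E_sym/class_repE.
have Ksigma i : K i (sigma i).
  by have [hK _ _] := hfs (class_rep i); apply: K_E (class_repE i) (hK _ (repE' i)).
have sigma_inj : injective sigma.
  move=> i1 i2 e; have e12 : E i1 i2 by apply: E_K (Ksigma i1) _; rewrite e.
  have [_ hinj _] := hfs (class_rep i1).
  apply: hinj; [exact: repE' | rewrite (class_rep_eq e12); exact: repE' |].
  by move: e; rewrite /sigma (class_rep_eq e12).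
have sigma_surj j : exists i, sigma i = j.
  have [i Kij] := K_surj j; have [_ _ hsurj] := hfs (class_rep i).
  have [i' ei' <-] := hsurj j (K_E (repE' i) Kij).
  by exists i'; rewrite /sigma -(class_rep_eq ei') -(class_rep_eq (class_repE i)).
have [tau tauK] := choice sigma_surj.
by exists sigma; split => //; exists tau => [i|j]; [apply: sigma_inj; rewrite tauK | exact: tauK].
Qed.

End GlueClasses.

Section IsoClasses.
Variables (R : pzRingType) (I J : Type) (A : I -> lmodType R^c) (B : J -> lmodType R^c).
Variables (phi : (forall i, A i) -> (forall j, B j)) (psi : (forall j, B j) -> (forall i, A i)).
Hypothesis phiK : cancel phi psi.
Hypothesis psiK : cancel psi phi.
Hypothesis phiD : forall x y, phi (fun i => x i + y i) = (fun j => phi x j + phi y j).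
Hypothesis phiZ :
  forall (r : R) x, phi (fun i => (r : R^c) *: x i) = (fun j => (r : R^c) *: phi x j).
Hypotheses (A_slender : forall i, slender (A i)) (A_local : forall i, local_End (A i)).
Hypotheses (B_slender : forall j, slender (B j)) (B_indec : forall j, indecomposable (B j)).
Hypotheses (I_nonmeas : nonmeasurable I) (J_nonmeas : nonmeasurable J).
Hypotheses (A_countable : iso_classes_countable A) (B_countable : iso_classes_countable B).

Lemma iso_class_bijection i : exists f : I -> J,
  [/\ forall i', mod_iso (A i) (A i') -> mod_iso (A i) (B (f i')),
    forall i1 i2, mod_iso (A i) (A i1) -> mod_iso (A i) (A i2) -> f i1 = f i2 -> i1 = i2 &
    forall j, mod_iso (A i) (B j) -> exists2 i', mod_iso (A i) (A i') & f i' = j].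
Proof.
have bIJ := iso_count_le phiK psiK phiD phiZ A_slender J_nonmeas B_indec (A_local i).
have A_indec i' := local_End_indecomposable (A_local i').
have bJI := iso_count_le psiK phiK (psiD phiK psiK phiD) (psiZ phiK psiK phiZ)
  B_slender I_nonmeas A_indec (A_local i).
have [j0 ij0] : exists j0, mod_iso (A i) (B j0).
  have iL k : List.In k [:: i] -> mod_iso (A i) (A k) by move=> [<-|[]]; exact: mod_iso_refl.
  have nd : List.NoDup [:: i] by constructor; [case | constructor].
  have [[|j0 L'] [_ L'iso //]] := bIJ _ nd iL.
  by exists j0; apply: L'iso; left.
have [gI gI_inj] := A_countable i.
have [gJ gJ_inj] := B_countable j0.
have gJ_inj' j1 j2 : mod_iso (A i) (B j1) -> mod_iso (A i) (B j2) -> gJ j1 = gJ j2 -> j1 = j2.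
  by move=> ij1 ij2; apply: gJ_inj; apply: mod_iso_trans (mod_iso_sym ij0) _.
exact: list_bounded_bijection gI_inj gJ_inj' j0 bIJ bJI.
Qed.

End IsoClasses.

Theorem corollary5p6 (R : pzRingType) (I J : Type)
    (A : I -> lmodType R^c) (B : J -> lmodType R^c)
    (hA : forall i, slender (A i) /\ local_End (A i))
    (hB : forall j, slender (B j) /\ indecomposable (B j))
    (hI : nonmeasurable I) (hJ : nonmeasurable J)
    (cA : iso_classes_countable A) (cB : iso_classes_countable B)
    (hiso : prod_iso A B) :
  exists sigma : I -> J, bijective sigma /\ forall i, mod_iso (A i) (B (sigma i)).
Proof.
have [phi [[psi phiK psiK] [phiD phiZ]]] := hiso.
have A_slender i := proj1 (hA i); have A_local i := proj2 (hA i).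
have B_slender j := proj1 (hB j); have B_indec j := proj2 (hB j).
apply: (@glue_class_bijections _ _ (fun i i' => mod_iso (A i) (A i'))
    (fun i j => mod_iso (A i) (B j))) => [i|i i'|i1 i2 i3|i i' j|i i' j|j|i].
- exact: mod_iso_refl.
- exact: mod_iso_sym.
- exact: mod_iso_trans.
- exact: mod_iso_trans.
- by move=> Kij Ki'j; apply: mod_iso_trans Kij (mod_iso_sym Ki'j).
- exact: B_iso_some_A phiD phiZ A_local B_slender B_indec hI j.
- exact: iso_class_bijection phiK psiK phiD phiZ A_slender A_local B_slender B_indec hI hJ cA cB i.
Qed.
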